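(* Let $G=(V,E,m,w)$ be a weighted graph admitting an intrinsic metric $\rho$ such that every ball $B_R(x)=\{y\in V:\rho(y,x)\le R\}$ ($x\in V$, $R>0$) is a finite set and the jump size $s:=\sup_{x\sim y}\rho(x,y)$ is finite. Suppose $G$ has polynomial volume growth with respect to $\rho$, i.e. there are $x_0\in V$ and constants $\alpha, C$ such that $m(B_R(x_0))\le C(1+R)^{\alpha}$ for all $R>0$. Then for all real $k\ge 1$, $$\dim \widetilde{\mathcal{P}}_{2k}(G)\le (k+1)\dim \mathcal{H}_{2k}(G).$$
   Context: A weighted graph $G=(V,E,m,w)$ consists of a locally finite, simple, undirected, connected graph $(V,E)$, a symmetric edge weight $w:E\to(0,\infty)$, $\{x,y\}\mapsto w_{xy}=w_{yx}$ (extended by $w_{xy}=0$ if $x\not\sim y$), and a vertex weight $m:V\to(0,\infty)$; $m(\Omega)=\sum_{x\in\Omega}m_x$. The Laplacian is $\Delta f(x)=\sum_{y\sim x}\frac{w_{xy}}{m_x}(f(y)-f(x))$. A (pseudo)metric $\rho:V\times V\to[0,\infty)$ (symmetric, triangle inequality, $\rho(x,x)=0$) is intrinsic if $\sum_{y\sim x}w_{xy}\rho^2(x,y)\le m_x$ for all $x\in V$. $\mathcal{H}_k(G)$ is the space of functions $f$ on $V$ with $\Delta f=0$ such that there exist $x_0\in V$ and $C_f$ with $\sup_{x\in B_R(x_0)}|f(x)|\le C_f(1+R)^k$ for all $R>0$. Let $\mathbb{Z}_-=\mathbb{Z}\cap(-\infty,0]$. An ancient solution of the discrete-time heat equation is a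 function $v$ on $V\times\mathbb{Z}_-$ with $v(x,t)-v(x,t-1)=\Delta v(x,t)$ for all $x\in V$, $t\in\mathbb{Z}_-$. $\widetilde{\mathcal{P}}_k(G)$ is the space of such ancient solutions $v$ for which there are $x_0\in V$ and $C_v$ with $\sup_{(x,t)\in B_R(x_0)\times([-R^2,0]\cap\mathbb{Z})}|v(x,t)|\le C_v(1+R)^k$ for all $R>0$. *)

From mathcomp Require Import all_boot all_order all_algebra.
From mathcomp Require Import all_classical all_reals all_analysis.
Set Implicit Arguments. Unset Strict Implicit. Unset Printing Implicit Defensive.
Import Order.TTheory GRing.Theory Num.Theory.
Local Open Scope ring_scope.

Section Defs.
Variables (R : realType) (V : eqType).

(* A weighted graph: locally finite simple undirected connected graph given
   by the finite neighbour lists [adj x], symmetric positive edge weights w,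
   positive vertex weights m. *)
Definition weighted_graph (adj : V -> seq V) (w : V -> V -> R) (m : V -> R) : Prop :=
  (forall x, uniq (adj x)) /\
  (forall x, x \notin adj x) /\
  (forall x y, (y \in adj x) = (x \in adj y)) /\
  (forall x y, y \in adj x -> 0 < w x y) /\
  (forall x y, w x y = w y x) /\
  (forall x, 0 < m x) /\
  (forall x y, exists p : seq V,
      path (fun a b => b \in adj a) x p && (last x p == y)).

Definition laplacian (adj : V -> seq V) (w : V -> V -> R) (m : V -> R)
  (f : V -> R) (x : V) : R :=
  \sum_(y <- adj x) (w x y / m x) * (f y - f x).

Definition pseudometric (rho : V -> V -> R) : Prop :=
  [/\ (forall x, rho x x = 0),
      (forall x y, rho x y = rho y x),
      (forall x y, 0 <= rho x y) &
      (forall x y z, rho x z <= rho x y + rho y z)].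

Definition intrinsic (adj : V -> seq V) (w : V -> V -> R) (m : V -> R)
  (rho : V -> V -> R) : Prop :=
  pseudometric rho /\
  forall x, \sum_(y <- adj x) w x y * rho x y ^+ 2 <= m x.

Definition finite_balls (rho : V -> V -> R) : Prop :=
  forall x r, 0 < r -> exists s : seq V, forall y, (y \in s) = (rho y x <= r).

Definition finite_jump (adj : V -> seq V) (rho : V -> V -> R) : Prop :=
  exists s : R, forall x y, y \in adj x -> rho x y <= s.

Definition poly_volume_growth (m : V -> R) (rho : V -> V -> R) : Prop :=
  exists (x0 : V) (alpha C : R), forall r, 0 < r ->
    forall s : seq V, uniq s -> (forall y, (y \in s) = (rho y x0 <= r)) ->
      \sum_(y <- s) m y <= C * powR (1 + r) alpha.

Definition harmonic_poly (adj : V -> seq V) (w : V -> V -> R) (m : V -> R)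
  (rho : V -> V -> R) (d : R) (f : V -> R) : Prop :=
  (forall x, laplacian adj w m f x = 0) /\
  exists (x0 : V) (C : R), forall r, 0 < r ->
    forall x, rho x x0 <= r -> `|f x| <= C * powR (1 + r) d.

(* Ancient solutions: u x n stands for v(x, -n), n : nat, so times range
   over Z_- = {0,-1,-2,...}.  Heat equation v(x,t)-v(x,t-1) = Δ v(x,t). *)
Definition ancient_poly (adj : V -> seq V) (w : V -> V -> R) (m : V -> R)
  (rho : V -> V -> R) (d : R) (u : V -> nat -> R) : Prop :=
  (forall x n, u x n - u x n.+1 = laplacian adj w m (fun y => u y n) x) /\
  exists (x0 : V) (C : R), forall r, 0 < r ->
    forall x (n : nat), rho x x0 <= r -> n%:R <= r ^+ 2 ->
      `|u x n| <= C * powR (1 + r) d.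

End Defs.

Definition lin_indep (R : realType) (D : Type) (N : nat) (f : 'I_N -> D -> R) : Prop :=
  forall c : 'I_N -> R, (forall z, \sum_(i < N) c i * f i z = 0) -> forall i, c i = 0.

Definition dim_le (R : realType) (D : Type) (S : (D -> R) -> Prop) (n : nat) : Prop :=
  forall N (f : 'I_N -> D -> R), (forall i, S (f i)) -> lin_indep f -> (N <= n)%N.

Definition uncurry_fun (R : realType) (V : Type) (u : V -> nat -> R) : V * nat -> R :=
  fun p => u p.1 p.2.

From mathcomp Require Import all_boot all_order all_algebra.
From mathcomp Require Import all_classical all_reals all_analysis.
From mathcomp Require Import lra ring zify.
Import Order.TTheory GRing.Theory Num.Theory.
Local Open Scope ring_scope.
Set Implicit Arguments. Unset Strict Implicit. Unset Printing Implicit Defensive.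

(* Testing the heat equation against eta^2 u, with eta a cut-off of slope 1/N,
   gives a Caccioppoli inequality: the L^2 norm of the time difference of u on
   the parabolic cylinder of size N is at most 2/N^2 times the L^2 norm of u on
   the cylinder of size 3N.  Iterating it J times gains N^(-2J), whereas the
   growth assumption and polynomial volume growth lose only a fixed power of N;
   hence some time difference of u vanishes and u is a polynomial in time.
   Comparing its leading coefficient with the growth bound (1 + sqrt t)^(2k)
   shows that the time degree is at most k, so dt^J u = 0 with J = trunc k + 1.
   Finally, for a family killed by dt^J, the top time differences at t = 0 are
   harmonic of growth 2k; the relations among them give a family killed by
   dt^(J-1), and induction yields dim <= J dim H_2k <= (k + 1) dim H_2k. *)

Section RealFacts.
Variable R : realType.

Lemma big_uniq_supp (T : eqType) (s1 s2 : seq T) (F : T -> R) :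
  uniq s1 -> uniq s2 -> (forall x, F x != 0 -> (x \in s1) && (x \in s2)) ->
  \sum_(x <- s1) F x = \sum_(x <- s2) F x.
Proof.
move=> u1 u2 suppF.
rewrite (bigID (mem s2)) [RHS](bigID (mem s1)) /=.
rewrite [X in _ + X]big1 => [|x /negbTE x2]; last first.
  by apply/eqP/contraT => /suppF; rewrite x2 andbF.
rewrite [X in _ = _ + X]big1 => [|x /negbTE x1]; last first.
  by apply/eqP/contraT => /suppF; rewrite x1.
rewrite !addr0 -[LHS]big_filter -[RHS]big_filter; apply/perm_big/uniq_perm.
- exact: filter_uniq.
- exact: filter_uniq.
by move=> x; rewrite !mem_filter andbC.
Qed.

Lemma ler_big_uniq_subset (T : eqType) (s1 s2 : seq T) (F G : T -> R) :
  uniq s1 -> uniq s2 -> {subset s1 <= s2} ->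
  (forall x, x \in s1 -> F x <= G x) -> (forall x, 0 <= G x) ->
  \sum_(x <- s1) F x <= \sum_(x <- s2) G x.
Proof.
move=> u1 u2 s12 FG G0.
have -> : \sum_(x <- s1) F x = \sum_(x <- s2) (if x \in s1 then F x else 0).
  rewrite (eq_big_seq (fun x => if x \in s1 then F x else 0)); last by move=> x ->.
  apply: big_uniq_supp => // x; case: ifP => [x1 _ | _]; last by rewrite eqxx.
  by rewrite s12.
by apply: ler_sum => x _; case: ifP => [/FG | _].
Qed.

Lemma ler_big_nat_widen (F : nat -> R) a b : (a <= b)%N -> (forall t, 0 <= F t) ->
  \sum_(0 <= t < a) F t <= \sum_(0 <= t < b) F t.
Proof.
move=> ab F0; rewrite [leRHS](big_cat_nat (leq0n a) ab) /= lerDl.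
exact: sumr_ge0.
Qed.

Lemma ler_sum_mem (T : eqType) (s : seq T) (F : T -> R) x :
  x \in s -> (forall y, 0 <= F y) -> F x <= \sum_(y <- s) F y.
Proof. by move=> xs F0; rewrite (big_rem x xs) /= lerDl sumr_ge0. Qed.

Lemma dim_le_relations (D : Type) (S : (D -> R) -> Prop) (n : nat) :
  dim_le S n -> forall a (h : 'I_a -> D -> R), (forall l, S (h l)) ->
  exists b, (a <= b + n)%N /\ exists lam : 'I_b -> 'I_a -> R,
    lin_indep lam /\ forall q z, \sum_(l < a) lam q l * h l z = 0.
Proof.
move=> dimS; elim=> [|a IH] h Sh.
  exists 0%N; split => //; exists (fun _ _ => 0); split; first by move=> ? ? [].
  by case.
have [hind|] := pselect (lin_indep h).
  exists 0%N; split; first exact: dimS hind.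
  exists (fun _ _ => 0); split; first by move=> ? ? [].
  by case.
move=> /existsNP [c] /not_implyP [rel_c] /existsNP [p /eqP cp_neq0].
have [b [ab [lam' [ind' rel']]]] := IH (fun l => h (lift p l)) (fun l => Sh _).
pose ext (mu : 'I_a -> R) l := if unlift p l is Some l' then mu l' else 0.
pose lam (q : 'I_b.+1) := if unlift ord0 q is Some q' then ext (lam' q') else c.
exists b.+1; split; first by rewrite addSn ltnS.
exists lam; split; last first.
  move=> q z; rewrite /lam; case: (unliftP ord0 q) => [q' _|_]; last exact: rel_c.
  rewrite (bigD1_ord p) //= /ext unlift_none mul0r add0r.
  under eq_bigr do rewrite liftK.
  exact: rel'.
move=> mu rel_mu.
have mu0 : mu ord0 = 0.
  move: (rel_mu p); rewrite big_ord_recl /lam unlift_none big1 ?addr0.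
    by move/eqP; rewrite mulf_eq0 (negbTE cp_neq0) orbF => /eqP.
  by move=> q _; rewrite liftK /ext unlift_none mulr0.
have mu_lift q : mu (lift ord0 q) = 0.
  apply: (ind' (fun q => mu (lift ord0 q))) => l; rewrite -[RHS](rel_mu (lift p l)).
  rewrite big_ord_recl /lam unlift_none mu0 mul0r add0r.
  by apply: eq_bigr => i _; rewrite liftK /ext liftK.
by move=> i; case: (unliftP ord0 i) => [q ->|->].
Qed.

Definition tdiff (a : nat -> R) n := a n - a n.+1.
Definition tdiffh (h : nat) (a : nat -> R) n := a n - a (n + h)%N.

Lemma iter_tdiff_tdiffh i h a n : iter i tdiff (tdiffh h a) n = tdiffh h (iter i tdiff a) n.
Proof. by elim: i n => [|i IH] n //=; rewrite /tdiff !IH /tdiffh addSn; ring. Qed.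

Lemma tdiffh_const_tdiff (a : nat -> R) c : (forall n, tdiff a n = c) ->
  forall h n, tdiffh h a n = h%:R * c.
Proof.
move=> ac; elim=> [|h IH] n; first by rewrite /tdiffh addn0 subrr mul0r.
move: (IH n) (ac (n + h)%N); rewrite /tdiffh /tdiff addnS mulrSr mulrDl mul1r.
by move=> <- <-; ring.
Qed.

Lemma iter_tdiffh_const h d : forall a c, (forall n, iter d tdiff a n = c) ->
  iter d (tdiffh h) a 0%N = h%:R ^+ d * c.
Proof.
elim: d => [|d IH] a c ac; first by rewrite expr0 mul1r; exact: ac.
rewrite iterSr (IH _ (h%:R * c)) ?exprSr ?mulrA // => n.
by rewrite iter_tdiff_tdiffh; apply: tdiffh_const_tdiff.
Qed.

Lemma norm_iter_tdiffh_le h j : forall (a : nat -> R) M n,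
  (forall i, (i <= n + j * h)%N -> `|a i| <= M) -> `|iter j (tdiffh h) a n| <= 2 ^+ j * M.
Proof.
elim: j => [|j IH] a M n aM; first by rewrite mul1r; apply: aM; rewrite addn0.
rewrite iterS /tdiffh exprS -mulrA mulr2n mulrDl !mul1r.
apply: le_trans (ler_normB _ _) _; apply: lerD; apply: IH => i hi; apply: aM.
  by apply: leq_trans hi _; rewrite leq_add2l leq_mul2r leqnSn orbT.
by apply: leq_trans hi _; rewrite mulSn addnA.
Qed.

Definition clamp01 (a : R) := Num.min 1 (Num.max 0 a).

Ltac clamp01_cases :=
  rewrite /clamp01 !minElt !maxElt; case: (ltP 0 _) => ?; repeat case: ltP => ?.

Lemma clamp01_ge0 a : 0 <= clamp01 a.
Proof. by clamp01_cases; lra. Qed.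

Lemma clamp01_le1 a : clamp01 a <= 1.
Proof. by clamp01_cases; lra. Qed.

Lemma clamp01_id1 a : 1 <= a -> clamp01 a = 1.
Proof. by move=> ?; clamp01_cases; lra. Qed.

Lemma clamp01_id0 a : a <= 0 -> clamp01 a = 0.
Proof. by move=> ?; clamp01_cases; lra. Qed.

Lemma clamp01_lip a b : `|clamp01 a - clamp01 b| <= `|a - b|.
Proof.
have := ler_norm (a - b); have := ler_norm (b - a); rewrite distrC => ? ?.
rewrite ler_norml /clamp01 !minElt !maxElt; apply/andP.
by case: (ltP 0 a) => ?; case: (ltP 0 b) => ?; repeat case: ltP => ?; split; lra.
Qed.

Lemma lt_bound_norm (x : R) : x < (Num.bound `|x|)%:R.
Proof. exact: le_lt_trans (ler_norm x) (archi_boundP _). Qed.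

Lemma powR_le_exprn (x a : R) (n : nat) : 1 <= x -> a <= n%:R -> powR x a <= x ^+ n.
Proof. by move=> x1 an; rewrite -powR_mulrn; [exact: ler_powR | lra]. Qed.

Lemma exists_nat_powR_gt (q K : R) : 0 < q -> exists t : nat, (1 <= t)%N /\ K < powR t%:R q.
Proof.
move=> q0; pose z := powR (`|K| + 1) q^-1.
exists (Num.bound `|z|).+1; split => //.
have z_le : z <= (Num.bound `|z|).+1%:R.
  by apply: le_trans (ltW (lt_bound_norm z)) _; rewrite ler_nat.
apply: lt_le_trans (_ : powR z q <= _); last first.
  by apply: ge0_ler_powR; rewrite ?nnegrE ?ler0n ?powR_ge0 // ltW.
rewrite /z -powRrM mulVf ?gt_eqF // powRr1; last exact: addr_ge0.
by have := ler_norm K; lra.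
Qed.

Lemma exprn_le_powR_bound (n : nat) (e K c : R) : 0 < c ->
  (forall t : nat, (1 <= t)%N -> t%:R ^+ n * c <= K * powR t%:R e) -> n%:R <= e.
Proof.
move=> c_gt0 bound; rewrite leNgt; apply/negP => e_lt.
have q_gt0 : 0 < n%:R - e by rewrite subr_gt0.
have [t [t_ge1 Kt]] := exists_nat_powR_gt (K / c) q_gt0.
have t_gt0 : (0 : R) < t%:R by rewrite ltr0n.
move: (bound t t_ge1).
have -> : t%:R ^+ n = powR t%:R e * powR t%:R (n%:R - e).
  by rewrite -powRD ?subrKC ?powR_mulrn ?ler0n // (gt_eqF t_gt0) implybT.
rewrite -mulrA [K * _]mulrC ler_pM2l ?powR_gt0 // => le_K.
by rewrite ltr_pdivrMr // in Kt; lra.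
Qed.

Lemma power_balance_le (n K : R) (J P : nat) : 1 <= n -> 0 <= K -> (2 * P + 2 = 2 * J)%N ->
  2 ^+ J / n ^+ (2 * J) * (K * (1 + 3 ^+ J * n) ^+ P) <= 2 ^+ J * K * (2 * 3 ^+ J) ^+ P / n.
Proof.
move=> n_ge1 K_ge0 PJ.
have n_gt0 : 0 < n by lra.
have three_ge1 : (1 : R) <= 3 ^+ J by rewrite exprn_ege1 //; lra.
have base_le : (1 + 3 ^+ J * n) ^+ P <= (2 * 3 ^+ J) ^+ P * n ^+ P.
  have lin_le : 1 + 3 ^+ J * n <= 2 * 3 ^+ J * n by nra.
  rewrite -exprMn; apply: lerXn2r => //; rewrite nnegrE; nra.
apply: le_trans (ler_wpM2l _ (ler_wpM2l K_ge0 base_le)) _.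
  by rewrite divr_ge0 ?exprn_ge0 //; lra.
rewrite -PJ (_ : 2 * P + 2 = P + P.+1 + 1)%N; last by lia.
have -> : 2 ^+ J / n ^+ (P + P.+1 + 1) * (K * ((2 * 3 ^+ J) ^+ P * n ^+ P)) =
    2 ^+ J * K * (2 * 3 ^+ J) ^+ P / n / n ^+ P.+1.
  by rewrite !exprD expr1; field; rewrite ?gt_eqF ?exprn_gt0.
rewrite ler_pdivrMr ?exprn_gt0 // ler_peMr ?exprn_ege1 //.
by rewrite divr_ge0 ?mulr_ge0 ?exprn_ge0 //; lra.
Qed.

End RealFacts.

Section Graph.
Variables (R : realType) (V : eqType) (adj : V -> seq V) (w : V -> V -> R)
  (m : V -> R) (rho : V -> V -> R).
Hypothesis adj_uniq : forall x, uniq (adj x).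
Hypothesis adj_sym : forall x y, (y \in adj x) = (x \in adj y).
Hypothesis w_gt0 : forall x y, y \in adj x -> 0 < w x y.
Hypothesis w_sym : forall x y, w x y = w y x.
Hypothesis m_gt0 : forall x, 0 < m x.
Hypothesis rho_pseudometric : pseudometric rho.
Hypothesis rho_intrinsic : forall x, \sum_(y <- adj x) w x y * rho x y ^+ 2 <= m x.

Local Notation lap := (laplacian adj w m).

Lemma mulr_m_ge0 x a : 0 <= a -> 0 <= m x * a.
Proof. exact/mulr_ge0/ltW. Qed.

Lemma rho_sym x y : rho x y = rho y x.
Proof. by case: rho_pseudometric. Qed.

Lemma rho_ge0 x y : 0 <= rho x y.
Proof. by case: rho_pseudometric. Qed.

Lemma rho_triangle x y z : rho x z <= rho x y + rho y z.
Proof. by case: rho_pseudometric. Qed.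

Lemma laplacianB (g1 g2 : V -> R) x : lap (fun y => g1 y - g2 y) x = lap g1 x - lap g2 x.
Proof. by rewrite /laplacian -sumrB; apply: eq_bigr => y _; ring. Qed.

Lemma laplacian_sum a (lam : 'I_a -> R) (g : 'I_a -> V -> R) x :
  lap (fun y => \sum_(l < a) lam l * g l y) x = \sum_(l < a) lam l * lap (g l) x.
Proof.
rewrite /laplacian; under [RHS]eq_bigr do rewrite mulr_sumr.
rewrite exchange_big /=; apply: eq_bigr => y _.
by rewrite -sumrB mulr_sumr; apply: eq_bigr => l _; ring.
Qed.

Section EdgeSums.
Variable L : seq V.
Hypothesis L_uniq : uniq L.

Lemma sum_adj_swap (F : V -> V -> R) :
  (forall x y, y \in adj x -> F x y != 0 -> (x \in L) && (y \in L)) ->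
  \sum_(x <- L) \sum_(y <- adj x) F x y = \sum_(x <- L) \sum_(y <- adj x) F y x.
Proof.
move=> suppF.
have sum_adj_L (G : V -> V -> R) :
    (forall x y, y \in adj x -> G x y != 0 -> (x \in L) && (y \in L)) ->
    \sum_(x <- L) \sum_(y <- adj x) G x y =
    \sum_(x <- L) \sum_(y <- L) (if y \in adj x then G x y else 0).
  move=> suppG; rewrite big_seq [RHS]big_seq; apply: eq_bigr => x xL.
  rewrite (eq_big_seq (fun y => if y \in adj x then G x y else 0)) => [|y -> //].
  apply: big_uniq_supp => // y; case: ifP => [yx /(suppG _ _ yx) /andP [_ ->]|_].
    by rewrite andbT.
  by rewrite eqxx.
rewrite sum_adj_L // sum_adj_L => [|x y yx /suppF]; last first.
  by rewrite -adj_sym => /(_ yx) /andP [-> ->].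
rewrite [RHS]exchange_big /=; apply: eq_bigr => x _; apply: eq_bigr => y _.
by rewrite adj_sym.
Qed.

Lemma sum_adj_ge0_sym (G : V -> V -> R) :
  (forall x y, y \in adj x -> G x y != 0 -> (x \in L) && (y \in L)) ->
  (forall x y, y \in adj x -> 0 <= G x y + G y x) ->
  0 <= \sum_(x <- L) \sum_(y <- adj x) G x y.
Proof.
move=> suppG G_sym_ge0.
have -> : \sum_(x <- L) \sum_(y <- adj x) G x y =
    (\sum_(x <- L) \sum_(y <- adj x) G x y + \sum_(x <- L) \sum_(y <- adj x) G y x) / 2.
  by rewrite -(sum_adj_swap suppG); field.
rewrite -big_split divr_ge0 // big_seq sumr_ge0 // => x _.
by rewrite -big_split big_seq sumr_ge0 // => y; apply: G_sym_ge0.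
Qed.

(* Summation by parts over the edges; the intrinsic bound on the weights
   turns the cut-off gradient term into m x / r^2. *)
Lemma cutoff_energy_le (eta f : V -> R) (r : R) : 0 < r ->
  (forall x y, y \in adj x -> (eta x != 0) || (eta y != 0) -> (x \in L) && (y \in L)) ->
  (forall x y, (eta x - eta y) ^+ 2 <= rho x y ^+ 2 / r ^+ 2) ->
  \sum_(x <- L) m x * (eta x ^+ 2 * f x * lap f x)
    <= (\sum_(x <- L) m x * f x ^+ 2) / (2 * r ^+ 2).
Proof.
move=> r_gt0 supp_eta eta_lip.
pose F x y := w x y * (eta x ^+ 2 * f x * (f y - f x)).
pose B x y := w x y * ((eta x - eta y) ^+ 2 * f x ^+ 2) / 2.
have -> : \sum_(x <- L) m x * (eta x ^+ 2 * f x * lap f x) =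
          \sum_(x <- L) \sum_(y <- adj x) F x y.
  apply: eq_bigr => x _; rewrite /laplacian !mulr_sumr; apply: eq_bigr => y _.
  by rewrite /F; field; rewrite gt_eqF.
have FB : \sum_(x <- L) \sum_(y <- adj x) F x y <= \sum_(x <- L) \sum_(y <- adj x) B x y.
  rewrite -subr_ge0 -sumrB.
  under eq_bigr do rewrite -sumrB.
  apply: sum_adj_ge0_sym => x y yx.
    move=> G_neq0; apply: supp_eta yx _; move: G_neq0; apply: contraNT.
    move=> /norP [/negbNE/eqP ex0 /negbNE/eqP ey0].
    by rewrite /B /F ex0 ey0; apply/eqP; ring.
  have -> : B x y - F x y + (B y x - F y x) = w x y * ((eta x * f x - eta y * f y) ^+ 2 +
      (eta x - eta y) ^+ 2 * (f x - f y) ^+ 2 / 2) by rewrite /B /F (w_sym y x); field.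
  by rewrite mulr_ge0 ?(ltW (w_gt0 yx)) // addr_ge0 ?sqr_ge0 // divr_ge0 // mulr_ge0 ?sqr_ge0.
apply: le_trans FB _; rewrite mulr_suml; apply: ler_sum => x _.
apply: (@le_trans _ _ (\sum_(y <- adj x) (w x y * f x ^+ 2 / 2) * (rho x y ^+ 2 / r ^+ 2))).
  rewrite big_seq [leRHS]big_seq; apply: ler_sum => y yx.
  have -> : B x y = (w x y * f x ^+ 2 / 2) * (eta x - eta y) ^+ 2 by rewrite /B; field.
  by rewrite ler_wpM2l ?eta_lip // divr_ge0 // mulr_ge0 ?sqr_ge0 ?(ltW (w_gt0 yx)).
have -> : \sum_(y <- adj x) (w x y * f x ^+ 2 / 2) * (rho x y ^+ 2 / r ^+ 2) =
    (\sum_(y <- adj x) w x y * rho x y ^+ 2) * (f x ^+ 2 / (2 * r ^+ 2)).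
  by rewrite mulr_suml; apply: eq_bigr => y _; field; rewrite gt_eqF.
by rewrite -[leRHS]mulrA ler_wpM2r ?rho_intrinsic // divr_ge0 ?sqr_ge0 // mulr_ge0 // sqr_ge0.
Qed.

End EdgeSums.

Variable s0 : R.
Hypothesis jump_le : forall x y, y \in adj x -> rho x y <= s0.
Variable p : V.
Variable ball : R -> seq V.
Hypothesis ball_uniq : forall r, uniq (ball r).
Hypothesis mem_ball : forall r, 0 < r -> forall y, (y \in ball r) = (rho y p <= r).

Section Cutoff.
Variable r : R.
Hypothesis r_gt0 : 0 < r.

Definition cutoff x := clamp01 ((2 * r - rho x p) / r).

Lemma cutoff_lip x y : (cutoff x - cutoff y) ^+ 2 <= rho x y ^+ 2 / r ^+ 2.
Proof.
move: (clamp01_lip ((2 * r - rho x p) / r) ((2 * r - rho y p) / r)).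
have -> : (2 * r - rho x p) / r - (2 * r - rho y p) / r = (rho y p - rho x p) / r.
  by field; rewrite gt_eqF.
rewrite normrM normfV (gtr0_norm r_gt0) => lip.
have : `|rho y p - rho x p| <= rho x y.
  have := rho_triangle y x p; have := rho_triangle x y p; rewrite (rho_sym y x).
  by rewrite ler_norml => ? ?; apply/andP; split; lra.
have rinv_ge0 : 0 <= r^-1 by rewrite invr_ge0 ltW.
move=> /(ler_wpM2r rinv_ge0) /(le_trans lip) le_xy.
rewrite -expr_div_n -real_normK ?num_real // lerXn2r ?nnegrE //.
by rewrite divr_ge0 ?rho_ge0 ?ltW.
Qed.

Lemma cutoff_ge0 x : 0 <= cutoff x. Proof. exact: clamp01_ge0. Qed.
Lemma cutoff_le1 x : cutoff x <= 1. Proof. exact: clamp01_le1. Qed.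

Lemma cutoff_id1 x : rho x p <= r -> cutoff x = 1.
Proof. by move=> ?; apply: clamp01_id1; rewrite ler_pdivlMr //; lra. Qed.

Lemma cutoff_supp x : cutoff x != 0 -> rho x p < 2 * r.
Proof.
apply: contraNT; rewrite -leNgt => ?; apply/eqP/clamp01_id0.
by rewrite pmulr_lle0 ?invr_gt0 //; lra.
Qed.

End Cutoff.

Definition heat_sol (f : V -> nat -> R) :=
  forall x t, f x t - f x t.+1 = lap (fun y => f y t) x.

(* [f x n] stands for v(x, -n), so [dt f] is v(x, t) - v(x, t - 1). *)
Definition dt (f : V -> nat -> R) x t := f x t - f x t.+1.

Definition cyl_energy (f : V -> nat -> R) (N : nat) :=
  \sum_(0 <= t < N * N) \sum_(x <- ball N%:R) m x * f x t ^+ 2.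

Lemma heat_sol_dt f : heat_sol f -> heat_sol (dt f).
Proof. by move=> heat_f x t; rewrite /dt !heat_f -laplacianB. Qed.

Lemma heat_sol_iter_dt f j : heat_sol f -> heat_sol (iter j dt f).
Proof. by move=> heat_f; elim: j => [|j IH] //=; apply: heat_sol_dt. Qed.

Lemma cyl_energy_ge0 f N : 0 <= cyl_energy f N.
Proof. by rewrite sumr_ge0 // => t _; rewrite sumr_ge0 // => x _; rewrite mulr_m_ge0 ?sqr_ge0. Qed.

Section Caccioppoli.
Variable f : V -> nat -> R.
Hypothesis heat_f : heat_sol f.
Variable N : nat.
Hypothesis N_gt0 : (0 < N)%N.
Hypothesis jump_leN : s0 <= N%:R.

Let r : R := N%:R.
Let L := ball (3 * N)%:R.
Let energy t := \sum_(x <- L) m x * f x t ^+ 2.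
Let cut_energy t := \sum_(x <- L) m x * (cutoff r x ^+ 2 * f x t ^+ 2).
Let cut_denergy t := \sum_(x <- L) m x * (cutoff r x ^+ 2 * dt f x t ^+ 2).

Let r_gt0 : 0 < r.
Proof. by rewrite ltr0n. Qed.

Let mem_L x : (x \in L) = (rho x p <= 3 * r).
Proof. by rewrite mem_ball natrM // mulr_gt0 // ltr0n. Qed.

Let cutoff_supp_L x y : y \in adj x -> (cutoff r x != 0) || (cutoff r y != 0) ->
  (x \in L) && (y \in L).
Proof.
have near_L a b : b \in adj a -> cutoff r a != 0 -> (a \in L) && (b \in L).
  move=> ba /(cutoff_supp r_gt0) a_near; have := jump_le ba.
  have := rho_triangle b a p; have : s0 <= r := jump_leN; have := r_gt0.
  rewrite (rho_sym b a) !mem_L => ? ? ? ?.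
  by apply/andP; split; lra.
move=> yx /orP [/(near_L _ _ yx) // | /(near_L y x)].
by rewrite -adj_sym andbC => /(_ yx).
Qed.

Let cut_energy_step t : cut_energy t + cut_denergy t <= cut_energy t.+1 + energy t / r ^+ 2.
Proof.
pose S := \sum_(x <- L) m x * (cutoff r x ^+ 2 * f x t * lap (fun y => f y t) x).
have -> : cut_energy t.+1 = cut_energy t - 2 * S + cut_denergy t.
  rewrite /cut_energy /cut_denergy /S mulr_sumr -sumrB -big_split /=.
  apply: eq_bigr => x _.
  have -> : f x t.+1 = f x t - dt f x t by rewrite /dt; ring.
  by rewrite /dt heat_f; ring.
have := cutoff_energy_le (ball_uniq _) (fun y => f y t) r_gt0 cutoff_supp_L (cutoff_lip r_gt0).
have -> : energy t / (2 * r ^+ 2) = (energy t / r ^+ 2) / 2 by field; rewrite gt_eqF.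
by rewrite -/S -/(energy t); lra.
Qed.

Let energy_ge0 t : 0 <= energy t.
Proof. by rewrite sumr_ge0 // => x _; rewrite mulr_m_ge0 ?sqr_ge0. Qed.

Let cut_energy_ge0 t : 0 <= cut_energy t.
Proof. by rewrite sumr_ge0 // => x _; rewrite mulr_m_ge0 // mulr_ge0 ?sqr_ge0. Qed.

Let cut_denergy_ge0 t : 0 <= cut_denergy t.
Proof. by rewrite sumr_ge0 // => x _; rewrite mulr_m_ge0 // mulr_ge0 ?sqr_ge0. Qed.

Let cut_energy_le t : cut_energy t <= energy t.
Proof.
apply: ler_sum => x _; apply: ler_wpM2l; first exact: ltW.
by rewrite ler_piMl ?sqr_ge0 // expr_le1 ?cutoff_ge0 ?cutoff_le1.
Qed.

Let sum_cut_denergy_le b :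
  \sum_(0 <= t < b) cut_denergy t <= cut_energy b + \sum_(0 <= t < b) energy t / r ^+ 2.
Proof.
elim: b => [|b IH]; first by rewrite !big_nil addr0.
by rewrite !big_nat_recr //=; have := cut_energy_step b; lra.
Qed.

Lemma caccioppoli : cyl_energy (dt f) N <= 2 / r ^+ 2 * cyl_energy f (3 * N).
Proof.
pose T := (N * N)%N.
pose A := \sum_(0 <= t < T) cut_denergy t.
pose C := \sum_(0 <= t < 2 * T) energy t / r ^+ 2.
have T_r : (T%:R : R) = r ^+ 2 by rewrite /T natrM expr2.
have cyl_le_A : cyl_energy (dt f) N <= A.
  apply: ler_sum => t _.
  apply: (ler_big_uniq_subset (ball_uniq _) (ball_uniq _)) => [x|x|x].
  - rewrite mem_ball ?ltr0n // -/L mem_L /r => xN.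
    by have := rho_ge0 x p; lra.
  - by rewrite mem_ball ?ltr0n // => /(cutoff_id1 r_gt0) ->; rewrite expr1n mul1r.
  - by rewrite mulr_m_ge0 // mulr_ge0 ?sqr_ge0.
(* Averaging this bound over b in [T, 2T) gives T * A <= 2 * \sum_(t < 2T) energy t. *)
have A_le b : (T <= b < 2 * T)%N -> A <= cut_energy b + C.
  case/andP => Tb /ltnW b2T.
  apply: le_trans (ler_big_nat_widen Tb cut_denergy_ge0) _.
  apply: le_trans (sum_cut_denergy_le b) _; rewrite lerD2l.
  by apply: ler_big_nat_widen => // t; rewrite divr_ge0 ?sqr_ge0.
have sumA : A *+ T <= \sum_(T <= b < 2 * T) cut_energy b + C *+ T.
  have := ler_sum_nat A_le.
  by rewrite big_split /= !sumr_const_nat (_ : 2 * T - T = T)%N // mul2n -addnn addnK.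
have cut_le : \sum_(T <= b < 2 * T) cut_energy b <= \sum_(0 <= b < 2 * T) energy b.
  rewrite [leRHS](big_cat_nat (leq0n T)) /=; last by rewrite mul2n -addnn leq_addr.
  by rewrite -[leLHS]add0r lerD ?sumr_ge0 ?ler_sum.
have energy_le : \sum_(0 <= t < 2 * T) energy t <= cyl_energy f (3 * N).
  by apply: ler_big_nat_widen => //; rewrite /T mulnACA leq_mul2r orbT.
have r2_gt0 : 0 < r ^+ 2 by rewrite exprn_gt0.
have CT : C *+ T = \sum_(0 <= t < 2 * T) energy t.
  by rewrite /C -mulr_suml -mulr_natr T_r divfK ?gt_eqF.
have := ler_wpM2r (ltW r2_gt0) cyl_le_A.
rewrite -[A *+ T]mulr_natr T_r CT in sumA.
by rewrite mulrAC ler_pdivlMr //; lra.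
Qed.

End Caccioppoli.

Lemma iter_caccioppoli f : heat_sol f -> forall j N, (0 < N)%N -> s0 <= N%:R ->
  cyl_energy (iter j dt f) N <= 2 ^+ j / N%:R ^+ (2 * j) * cyl_energy f (3 ^ j * N).
Proof.
move=> heat_f; elim=> [|j IH] N N_gt0 s0N.
  by rewrite /= expr0 muln0 expr0 divr1 mul1r mul1n.
have s0_3N : s0 <= (3 * N)%:R by apply: le_trans s0N _; rewrite ler_nat leq_pmull.
apply: le_trans (caccioppoli (heat_sol_iter_dt j heat_f) N_gt0 s0N) _.
apply: le_trans (ler_wpM2l _ (IH _ _ s0_3N)) _.
- by rewrite divr_ge0 ?exprn_ge0.
- by rewrite muln_gt0.
have -> : (3 ^ j * (3 * N) = 3 ^ j.+1 * N)%N by rewrite expnS mulnCA mulnA.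
rewrite mulrA ler_wpM2r ?cyl_energy_ge0 //.
set n : R := N%:R; have n_gt0 : 0 < n by rewrite ltr0n.
rewrite natrM exprMn mulnS exprD [2 ^+ j.+1]exprS -/n.
set b : R := 3%:R ^+ (2 * j).
have b_ge1 : 1 <= b by rewrite exprn_ege1 // ler1n.
have -> : 2 / n ^+ 2 * (2 ^+ j / (b * n ^+ (2 * j))) =
    (2 * 2 ^+ j / (n ^+ 2 * n ^+ (2 * j))) / b.
  by field; rewrite !gt_eqF ?exprn_gt0 // (lt_le_trans ltr01).
rewrite ler_pdivrMr ?(lt_le_trans ltr01) // ler_peMr //.
by rewrite !mulr_ge0 ?invr_ge0 ?mulr_ge0 ?exprn_ge0 ?ltW.
Qed.

Lemma iter_dt_tdiff f j x n : iter j dt f x n = iter j (@tdiff R) (f x) n.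
Proof. by elim: j n => [|j IH] n //=; rewrite /dt /tdiff !IH. Qed.

Lemma iter_dt_sum a (lam : 'I_a -> R) (F : 'I_a -> V -> nat -> R) j x t :
  iter j dt (fun x t => \sum_(l < a) lam l * F l x t) x t =
  \sum_(l < a) lam l * iter j dt (F l) x t.
Proof.
elim: j t => [|j IH] t //=.
by rewrite /dt !IH -sumrB; apply: eq_bigr => l _; ring.
Qed.

Lemma heat_sol_sum a (lam : 'I_a -> R) (F : 'I_a -> V -> nat -> R) :
  (forall l, heat_sol (F l)) -> heat_sol (fun x t => \sum_(l < a) lam l * F l x t).
Proof.
move=> heat_F x t; rewrite laplacian_sum -sumrB; apply: eq_bigr => l _.
by rewrite -heat_F; ring.
Qed.

Lemma iter_dt_const f j : (forall x t, iter j.+1 dt f x t = 0) ->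
  forall x t, iter j dt f x t = iter j dt f x 0%N.
Proof.
move=> vanish x; elim=> [|t IH] //; rewrite -IH.
by have := vanish x t; rewrite iterS /dt; lra.
Qed.

Lemma iter_dt_eq0_add f j : (forall x t, iter j dt f x t = 0) ->
  forall i x t, iter (i + j) dt f x t = 0.
Proof.
move=> vanish; elim=> [|i IH] x t; first exact: vanish.
by rewrite addSn iterS /dt !IH subrr.
Qed.

Definition parabolic_growth (d : R) (f : V -> nat -> R) := exists C, 0 <= C /\
  forall r, 0 < r -> forall x t, rho x p <= r -> t%:R <= r ^+ 2 ->
    `|f x t| <= C * powR (1 + r) d.

Lemma parabolic_growth_dt e f : 0 <= e -> parabolic_growth e f -> parabolic_growth e (dt f).
Proof.
move=> e_ge0 [C [C_ge0 f_le]]; exists (C * (1 + powR 2 e)).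
split; first by rewrite mulr_ge0 // addr_ge0 ?powR_ge0.
move=> r r_gt0 x t xr tr.
have r1_gt0 : 0 < r + 1 by lra.
have xr1 : rho x p <= r + 1 by lra.
have tr1 : (t.+1%:R : R) <= (r + 1) ^+ 2.
  by rewrite -addn1 natrD; move: tr; rewrite !expr2 => ?; nra.
have grow : powR (1 + (r + 1)) e <= powR 2 e * powR (1 + r) e.
  by rewrite -powRM ?ge0_ler_powR ?nnegrE //; lra.
apply: le_trans (ler_normB _ _) _.
have := f_le r r_gt0 x t xr tr; have := f_le _ r1_gt0 x t.+1 xr1 tr1.
have := ler_wpM2l C_ge0 grow; rewrite mulrDr mulr1 mulrDl; lra.
Qed.

Lemma parabolic_growth_iter_dt e f j : 0 <= e -> parabolic_growth e f ->
  parabolic_growth e (iter j dt f).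
Proof. by move=> e_ge0 growth_f; elim: j => [|j IH] //=; apply: parabolic_growth_dt. Qed.

Lemma parabolic_growth_sum e a (lam : 'I_a -> R) (F : 'I_a -> V -> nat -> R) :
  (forall l, parabolic_growth e (F l)) ->
  parabolic_growth e (fun x t => \sum_(l < a) lam l * F l x t).
Proof.
move=> /choice [C growth_F]; exists (\sum_(l < a) `|lam l| * C l).
split; first by rewrite sumr_ge0 // => l _; rewrite mulr_ge0 //; case: (growth_F l).
move=> r r_gt0 x t xr tr; apply: le_trans (ler_norm_sum _ _ _) _.
rewrite mulr_suml; apply: ler_sum => l _; rewrite normrM -mulrA ler_wpM2l //.
by case: (growth_F l) => _; apply.
Qed.

Variables (alpha Cv : R).
Hypothesis volume_le : forall r, 0 < r -> \sum_(y <- ball r) m y <= Cv * powR (1 + r) alpha.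

Lemma cyl_energy_growth_le f d C (D A M : nat) : 0 <= C ->
  (forall r, 0 < r -> forall x t, rho x p <= r -> t%:R <= r ^+ 2 ->
    `|f x t| <= C * powR (1 + r) d) ->
  d <= D%:R -> alpha <= A%:R -> (0 < M)%N ->
  cyl_energy f M <= `|Cv| * C ^+ 2 * (1 + M%:R) ^+ (A + 2 * D + 2).
Proof.
move=> C_ge0 f_le dD alphaA M_gt0.
have M_gt0R : (0 : R) < M%:R by rewrite ltr0n.
set M1 : R := 1 + M%:R; have M1_ge1 : 1 <= M1 by rewrite /M1; lra.
set B := C * M1 ^+ D.
have f2_le x t : x \in ball M%:R -> (t < M * M)%N -> f x t ^+ 2 <= B ^+ 2.
  rewrite mem_ball // => xM tM.
  have tM2 : (t%:R : R) <= M%:R ^+ 2 by rewrite expr2 -natrM ler_nat ltnW.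
  have fB : `|f x t| <= B.
    by apply: le_trans (f_le _ M_gt0R x t xM tM2) _; rewrite ler_wpM2l ?powR_le_exprn.
  by rewrite -real_normK ?num_real // lerXn2r ?nnegrE // (le_trans _ fB).
have slice_le t : (t < M * M)%N ->
    \sum_(x <- ball M%:R) m x * f x t ^+ 2 <= `|Cv| * M1 ^+ A * B ^+ 2.
  move=> tM; apply: le_trans (_ : _ <= (\sum_(x <- ball M%:R) m x) * B ^+ 2) _.
    rewrite mulr_suml big_seq [leRHS]big_seq; apply: ler_sum => x xb.
    by rewrite ler_wpM2l ?f2_le ?ltW.
  rewrite ler_wpM2r ?sqr_ge0 //; apply: le_trans (volume_le M_gt0R) _.
  apply: le_trans (ler_wpM2r (powR_ge0 _ _) (ler_norm Cv)) _.
  by rewrite ler_wpM2l ?powR_le_exprn.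
apply: le_trans (_ : _ <= \sum_(0 <= t < M * M) `|Cv| * M1 ^+ A * B ^+ 2) _.
  by rewrite /cyl_energy big_nat [leRHS]big_nat; apply: ler_sum => t /andP [_ /slice_le].
rewrite sumr_const_nat subn0 -mulr_natr natrM.
have MM_le : (M%:R * M%:R : R) <= M1 ^+ 2 by rewrite expr2 /M1; nra.
apply: le_trans (ler_wpM2l _ MM_le) _.
  by rewrite mulr_ge0 ?sqr_ge0 // mulr_ge0 // exprn_ge0 //; lra.
have -> : M1 ^+ (A + 2 * D + 2) = M1 ^+ A * (M1 ^+ D) ^+ 2 * M1 ^+ 2.
  by rewrite -exprM -!exprD; congr (_ ^+ _); lia.
by rewrite /B exprMn le_eqVlt; apply/orP; left; apply/eqP; ring.
Qed.

Lemma cyl_energy_ge_point f x t N : (0 < N)%N -> rho x p <= N%:R -> (t < N * N)%N ->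
  m x * f x t ^+ 2 <= cyl_energy f N.
Proof.
move=> N_gt0 xN tN.
have xb : x \in ball N%:R by rewrite mem_ball ?ltr0n.
have tI : t \in index_iota 0 (N * N) by rewrite mem_index_iota.
apply: le_trans (ler_sum_mem (F := fun t => \sum_(y <- ball N%:R) m y * f y t ^+ 2) tI _).
  by apply: (ler_sum_mem (F := fun y => m y * f y t ^+ 2) xb) => y; rewrite mulr_m_ge0 ?sqr_ge0.
by move=> s; rewrite sumr_ge0 // => y _; rewrite mulr_m_ge0 ?sqr_ge0.
Qed.

Lemma cyl_energy_iter_dt_decay f d : heat_sol f -> parabolic_growth d f ->
  exists J K N0, forall N, (N0 <= N)%N -> cyl_energy (iter J dt f) N <= K / N%:R.
Proof.
move=> heat_f [C [C_ge0 f_le]].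
pose D := Num.bound `|d|; pose A := Num.bound `|alpha|.
pose P := (A + 2 * D + 2)%N; pose J := P.+1.
exists J, (2 ^+ J * (`|Cv| * C ^+ 2) * (2 * 3 ^+ J) ^+ P), (Num.bound `|s0|).+1.
move=> N N0N; have N_gt0 : (0 < N)%N by apply: leq_trans N0N.
have s0N : s0 <= N%:R.
  by apply: le_trans (ltW (lt_bound_norm s0)) _; rewrite ler_nat ltnW.
apply: le_trans (iter_caccioppoli heat_f J N_gt0 s0N) _.
have := cyl_energy_growth_le C_ge0 f_le (ltW (lt_bound_norm d)) (ltW (lt_bound_norm alpha)).
move=> /(_ (3 ^ J * N)%N); rewrite muln_gt0 expn_gt0 N_gt0 => /(_ isT) energy_le.
apply: le_trans (ler_wpM2l _ energy_le) _; first by rewrite divr_ge0 ?exprn_ge0.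
rewrite natrM natrX; apply: power_balance_le; rewrite ?ler1n ?mulr_ge0 ?sqr_ge0 //.
by rewrite /J mulnS addnC.
Qed.

Lemma heat_growth_iter_dt_eq0 f d : heat_sol f -> parabolic_growth d f ->
  exists J, forall x t, iter J dt f x t = 0.
Proof.
move=> heat_f growth_f; have [J [K [N0 decay]]] := cyl_energy_iter_dt_decay heat_f growth_f.
exists J => x t; apply/eqP/contraT => g_neq0.
set g := iter J dt f; pose y := m x * g x t ^+ 2.
have y_gt0 : 0 < y by rewrite mulr_gt0 // exprn_even_gt0.
pose N := maxn N0 (maxn (Num.bound `|rho x p|) (maxn t.+1 (Num.bound `|K / y|))).
have N0N : (N0 <= N)%N by rewrite leq_maxl.
have tN1 : (t.+1 <= N)%N.
  by rewrite /N (leq_trans _ (leq_maxr _ _)) // (leq_trans _ (leq_maxr _ _)) ?leq_maxl.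
have N_gt0 : (0 < N)%N by apply: leq_trans tN1.
have bound_le (z : R) : (Num.bound `|z| <= N)%N -> z < N%:R.
  by move=> zN; apply: lt_le_trans (lt_bound_norm z) _; rewrite ler_nat.
have xN : rho x p <= N%:R.
  by apply/ltW/bound_le; rewrite /N (leq_trans _ (leq_maxr _ _)) ?leq_maxl.
have tN : (t < N * N)%N by apply: leq_trans tN1 (leq_pmulr _ N_gt0).
have KN : K / y < N%:R.
  by apply: bound_le; rewrite /N (leq_trans _ (leq_maxr _ _)) // (leq_trans _ (leq_maxr _ _)) ?leq_maxr.
have := le_trans (cyl_energy_ge_point g N_gt0 xN tN) (decay N N0N).
by rewrite ler_pdivlMr ?ltr0n // mulrC -ler_pdivlMr // leNgt KN.
Qed.

Lemma time_poly_coef_le f C e x d c : 0 <= C -> 0 <= e -> (0 < d)%N ->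
  (forall r, 0 < r -> forall x t, rho x p <= r -> t%:R <= r ^+ 2 ->
    `|f x t| <= C * powR (1 + r) e) ->
  (forall n, iter d (@tdiff R) (f x) n = c) ->
  forall t : nat, (1 <= t)%N ->
  t%:R ^+ (2 * d) * `|c| <= 2 ^+ d * C * powR (2 + rho x p + d%:R) e * powR t%:R e.
Proof.
move=> C_ge0 e_ge0 d_gt0 f_le const t t_ge1.
have t_ge1R : (1 : R) <= t%:R by rewrite ler1n.
have d_ge1R : (1 : R) <= d%:R by rewrite ler1n.
have rho_ge0x := rho_ge0 x p.
set r := 1 + rho x p + d%:R * t%:R.
have fx_le i : (i <= 0 + d * (t * t))%N -> `|f x i| <= C * powR (1 + r) e.
  rewrite -(ler_nat R) !natrM => i_le; apply: f_le; rewrite /r; try nra.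
  have dt_ge0 : (0 : R) <= d%:R * t%:R by rewrite mulr_ge0 ?ler0n.
  apply: le_trans i_le (le_trans (_ : _ <= (d%:R * t%:R) ^+ 2) _).
    by rewrite expr2 mulrACA ler_wpM2r ?mulr_ge0 ?ler0n // ler_peMl ?ler0n.
  by rewrite lerXn2r ?nnegrE //; lra.
have := norm_iter_tdiffh_le fx_le.
rewrite (iter_tdiffh_const (t * t) const) normrM normrX normr_nat natrM -expr2 -exprM.
move/le_trans; apply; rewrite -!mulrA ler_wpM2l ?exprn_ge0 // ler_wpM2l //.
rewrite -powRM ?ge0_ler_powR ?nnegrE // /r; nra.
Qed.

Lemma time_degree_le f e : 0 <= e -> parabolic_growth e f -> forall d,
  (forall x t, iter d.+1 dt f x t = 0) -> forall x, iter d dt f x 0%N != 0 ->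
  (2 * d)%:R <= e.
Proof.
move=> e_ge0 [C [C_ge0 f_le]] [|d] vanish x c_neq0; first by rewrite muln0.
have const n : iter d.+1 (@tdiff R) (f x) n = iter d.+1 dt f x 0%N.
  by rewrite -iter_dt_tdiff (iter_dt_const vanish).
apply: exprn_le_powR_bound (time_poly_coef_le C_ge0 e_ge0 (ltn0Sn d) f_le const).
by rewrite normr_gt0.
Qed.

Lemma harmonic_poly_iter_dt f e j : 0 <= e -> heat_sol f -> parabolic_growth e f ->
  (forall x t, iter j.+1 dt f x t = 0) ->
  harmonic_poly adj w m rho e (fun x => iter j dt f x 0%N).
Proof.
move=> e_ge0 heat_f growth_f vanish; split.
  by move=> x; rewrite -(heat_sol_iter_dt j heat_f x 0%N); apply: vanish.
have [C [_ f_le]] := parabolic_growth_iter_dt j e_ge0 growth_f.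
exists p, C => r r_gt0 x xr.
by apply: f_le; rewrite // expr2 mulr_ge0 // ltW.
Qed.

Lemma dim_le_iter_dt_eq0 e n : 0 <= e -> dim_le (harmonic_poly adj w m rho e) n ->
  forall j a (F : 'I_a -> V -> nat -> R),
  (forall l, [/\ heat_sol (F l), parabolic_growth e (F l) & forall x t, iter j dt (F l) x t = 0]) ->
  lin_indep (fun l => uncurry_fun (F l)) -> (a <= j * n)%N.
Proof.
move=> e_ge0 dimH; elim=> [|j IH] a F F_prop indep.
  case: a F F_prop indep => [//|a] F F_prop indep.
  have sum0 z : \sum_(i < a.+1) 1 * uncurry_fun (F i) z = 0.
    rewrite big1 // => i _; case: z => x t; rewrite /uncurry_fun /=.
    by case: (F_prop i) => _ _ /(_ x t) /= ->; rewrite mulr0.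
  by have /eqP := indep (fun _ => 1) sum0 ord0; rewrite oner_eq0.
pose h l x := iter j dt (F l) x 0%N.
have h_harm l : harmonic_poly adj w m rho e (h l).
  by case: (F_prop l) => *; apply: harmonic_poly_iter_dt.
have [b [ab [lam [lam_indep lam_rel]]]] := dim_le_relations dimH h_harm.
pose G q x t := \sum_(l < a) lam q l * F l x t.
suff bjn : (b <= j * n)%N by apply: leq_trans ab _; rewrite mulSn addnC leq_add2l.
apply: (IH b G) => [q|mu mu_rel].
  split; [by apply: heat_sol_sum => l; case: (F_prop l)
         |by apply: parabolic_growth_sum => l; case: (F_prop l)|].
  move=> x t; rewrite iter_dt_sum -[RHS](lam_rel q x); apply: eq_bigr => l _.
  by case: (F_prop l) => _ _ /iter_dt_const ->.
apply: lam_indep => l; apply: (indep (fun i => \sum_(q < b) mu q * lam q i)) => -[x t].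
rewrite -[RHS](mu_rel (x, t)) /uncurry_fun /G /=.
under eq_bigr do rewrite mulr_suml.
rewrite exchange_big /=; apply: eq_bigr => q _.
by rewrite mulr_sumr; apply: eq_bigr => i _; rewrite mulrA.
Qed.

Lemma iter_dt_eq0_above_degree f (k : R) (J : nat) : 0 <= k -> heat_sol f ->
  parabolic_growth (2 * k) f -> k < J%:R -> forall x t, iter J dt f x t = 0.
Proof.
move=> k_ge0 heat_f growth_f kJ.
suff down i : (forall x t, iter (i + J) dt f x t = 0) -> forall x t, iter J dt f x t = 0.
  have [J' vanish] := heat_growth_iter_dt_eq0 heat_f growth_f.
  case: (leqP J' J) => [J'J | JJ'].
    by rewrite -(subnK J'J); apply: iter_dt_eq0_add.
  by apply: (down (J' - J)%N); rewrite subnK // ltnW.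
elim: i => [|i IH] vanish_i //.
apply: IH => x t; apply/eqP/contraT => nz.
have vanish' x' t' : iter (i + J).+1 dt f x' t' = 0 by rewrite -addSn vanish_i.
rewrite (iter_dt_const vanish') in nz.
have := time_degree_le (mulr_ge0 (ler0n R 2) k_ge0) growth_f vanish' nz.
have : (J%:R : R) <= (i + J)%:R by rewrite ler_nat leq_addl.
by rewrite natrM; lra.
Qed.

Lemma heat_dim_le (k : R) (n N : nat) (u : 'I_N -> V -> nat -> R) : 1 <= k ->
  dim_le (harmonic_poly adj w m rho (2 * k)) n ->
  (forall i, heat_sol (u i) /\ parabolic_growth (2 * k) (u i)) ->
  lin_indep (fun i => uncurry_fun (u i)) -> (N%:R : R) <= (k + 1) * n%:R.
Proof.
move=> k_ge1 dimH u_prop indep.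
have k_ge0 : 0 <= k by lra.
have /andP [trunc_le k_lt] := truncn_itv k_ge0.
have vanish i := iter_dt_eq0_above_degree k_ge0 (u_prop i).1 (u_prop i).2 k_lt.
have := dim_le_iter_dt_eq0 (mulr_ge0 (ler0n R 2) k_ge0) dimH
  (fun i => And3 (u_prop i).1 (u_prop i).2 (vanish i)) indep.
rewrite -(ler_nat R) natrM => /le_trans; apply; rewrite ler_wpM2r ?ler0n //.
by rewrite -natr1 lerD2r.
Qed.

End Graph.

Lemma ancient_poly_growth (R : realType) (V : eqType) (adj : V -> seq V) (w : V -> V -> R)
  (m : V -> R) (rho : V -> V -> R) (p : V) (e : R) (u : V -> nat -> R) :
  pseudometric rho -> 0 <= e -> ancient_poly adj w m rho e u -> parabolic_growth rho p e u.
Proof.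
move=> [_ _ rho_ge0 rho_tri] e_ge0 [_ [x0 [C u_le]]].
have d_ge0 := rho_ge0 p x0.
exists (`|C| * powR (1 + rho p x0) e); split; first by rewrite mulr_ge0 ?powR_ge0.
move=> r r_gt0 x t xr tr.
have rd_gt0 : 0 < r + rho p x0 by lra.
have xrd : rho x x0 <= r + rho p x0 by have := rho_tri x p x0; lra.
have trd : (t%:R : R) <= (r + rho p x0) ^+ 2 by apply: le_trans tr _; rewrite lerXn2r ?nnegrE; lra.
apply: le_trans (u_le _ rd_gt0 x t xrd trd) _.
apply: le_trans (ler_wpM2r (powR_ge0 _ _) (ler_norm C)) _.
rewrite -mulrA ler_wpM2l // -powRM ?ge0_ler_powR ?nnegrE //; nra.
Qed.

Lemma finite_balls_enum (R : realType) (V : eqType) (rho : V -> V -> R) (p : V) :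
  finite_balls rho -> exists ball : R -> seq V,
    (forall r, uniq (ball r)) /\ forall r, 0 < r -> forall y, (y \in ball r) = (rho y p <= r).
Proof.
move=> fin.
have ball_ex r : exists s : seq V, 0 < r -> forall y, (y \in s) = (rho y p <= r).
  have [r_gt0|r_le0] := pselect (0 < r); last by exists [::] => /r_le0.
  by have [s sP] := fin p r r_gt0; exists s.
have [ball ballP] := choice ball_ex.
exists (fun r => undup (ball r)); split => [r|r r_gt0 y]; first exact: undup_uniq.
by rewrite mem_undup ballP.
Qed.

Unset Implicit Arguments.

Theorem theorem1p3 (R : realType) (V : eqType)
  (adj : V -> seq V) (w : V -> V -> R) (m : V -> R) (rho : V -> V -> R) :
  weighted_graph adj w m ->
  intrinsic adj w m rho ->
  finite_balls rho ->
  finite_jump adj rho ->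
  poly_volume_growth m rho ->
  forall k : R, 1 <= k ->
  forall n : nat, dim_le (harmonic_poly adj w m rho (2 * k)) n ->
  forall (N : nat) (u : 'I_N -> V -> nat -> R),
    (forall i, ancient_poly adj w m rho (2 * k) (u i)) ->
    lin_indep (fun i => uncurry_fun (u i)) ->
    (N%:R : R) <= (k + 1) * n%:R.
Proof.
move=> [adj_uniq [_ [adj_sym [w_gt0 [w_sym [m_gt0 _]]]]]] [rho_pm rho_intr] fin
  [s0 jump_le] [p [alpha [Cv volume_le]]] k k_ge1 n dimH N u u_ancient indep.
have [ball [ball_uniq mem_ball]] := finite_balls_enum p fin.
apply: (heat_dim_le adj_uniq adj_sym w_gt0 w_sym m_gt0 rho_pm rho_intr jump_le
  ball_uniq mem_ball (fun r r_gt0 => volume_le r r_gt0 _ (ball_uniq r) (mem_ball r r_gt0))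
  k_ge1 dimH _ indep) => i.
split; first exact: (u_ancient i).1.
by apply: ancient_poly_growth rho_pm _ (u_ancient i); lra.
Qed.
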